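(* If $\oplus$ is the drastic maximum $T_d'$ and $\otimes$ is a $T$-norm with no zero divisors, then $(\otimes,\oplus)$ satisfies the rearrangement inequality. If $\otimes$ is the drastic minimum $T_d$ and $\oplus$ is a $T$-conorm such that the $T$-norm $\Phi(\oplus)(x,y)=1-((1-x)\oplus(1-y))$ has no zero divisors, then $(\otimes,\oplus)$ satisfies the dual rearrangement inequality.
   Context: A uninorm is a function $\otimes:[0,1]^2\to[0,1]$ that is commutative, associative, monotonic ($x\leq y$ implies $x\otimes z\leq y\otimes z$), and has an identity element; a $T$-norm is a uninorm with identity $1$, a $T$-conorm one with identity $0$. For a $T$-norm $f$, a number $0<x<1$ is a zero divisor if there is $0<y<1$ with $f(x,y)=0$. The drastic minimum is $T_d(x,y)=\min(x,y)$ if $\max(x,y)=1$ and $0$ otherwise; the drastic maximum is $T_d'(x,y)=\max(x,y)$ if $\min(x,y)=0$ and $1$ otherwise. $(\otimes,\oplus)$ satisfies the rearrangement inequality if for every $n\geq1$, all $0\leq x_1\leq\cdots\leq x_n\leq 1$, $0\leq y_1\leq\cdots\leq y_n\leq 1$ and every permutation $\sigma$ of $\{1,\dots,n\}$, $$(x_n\otimes y_1)\oplus\cdots\oplus(x_1\otimes y_n)\leq (x_{\sigma(1)}\otimes y_1)\oplus\cdots\oplus(x_{\sigma(n)}\otimes y_n)\leq (x_1\otimes y_1)\oplus\cdots\oplus(x_n\otimes y_n),$$ and the dual rearrangement inequality if for all such data $$(x_n\oplus y_1)\otimes\cdots\otimes(x_1\oplus y_n)\geq (x_{\sigma(1)}\oplus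 y_1)\otimes\cdots\otimes(x_{\sigma(n)}\oplus y_n)\geq (x_1\oplus y_1)\otimes\cdots\otimes(x_n\oplus y_n).$$ *)

From HB Require Import structures.
From mathcomp Require Import all_boot all_order all_algebra all_fingroup.
From mathcomp Require Import reals.
Set Implicit Arguments. Unset Strict Implicit. Unset Printing Implicit Defensive.
Import Order.TTheory GRing.Theory Num.Theory.
Local Open Scope ring_scope.

Section Defs.
Variable R : realType.

Definition in01 (x : R) : Prop := 0 <= x <= 1.

Definition uninorm (f : R -> R -> R) : Prop :=
  [/\ (forall x y, in01 x -> in01 y -> in01 (f x y)),
      (forall x y, in01 x -> in01 y -> f x y = f y x),
      (forall x y z, in01 x -> in01 y -> in01 z -> f x (f y z) = f (f x y) z),
      (forall x y z, in01 x -> in01 y -> in01 z -> x <= y -> f x z <= f y z)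
    & (exists2 e, in01 e & forall x, in01 x -> f e x = x)].

Definition Tnorm (f : R -> R -> R) : Prop :=
  uninorm f /\ forall x, in01 x -> f 1 x = x.

Definition Tconorm (f : R -> R -> R) : Prop :=
  uninorm f /\ forall x, in01 x -> f 0 x = x.

Definition no_zero_divisors (f : R -> R -> R) : Prop :=
  forall x y, 0 < x < 1 -> 0 < y < 1 -> f x y <> 0.

Definition drastic_min (x y : R) : R :=
  if Num.max x y == 1 then Num.min x y else 0.
Definition drastic_max (x y : R) : R :=
  if Num.min x y == 0 then Num.max x y else 1.

Definition Phi (oplus : R -> R -> R) (x y : R) : R :=
  1 - oplus (1 - x) (1 - y).

Definition opfold (op : R -> R -> R) (n : nat) (a : 'I_n.+1 -> R) : R :=
  foldl op (a ord0) [seq a (lift ord0 i) | i : 'I_n].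

Definition nondecr (n : nat) (x : 'I_n.+1 -> R) : Prop :=
  forall i j : 'I_n.+1, (i <= j)%N -> x i <= x j.

(* Rearrangement inequality; sequences of length n+1, i.e. every length >= 1.
   x (rev_ord i) is x_{n+1-i} in 1-based indexing. *)
Definition rearrangement (otimes oplus : R -> R -> R) : Prop :=
  forall (n : nat) (x y : 'I_n.+1 -> R),
    (forall i, in01 (x i)) -> (forall i, in01 (y i)) ->
    nondecr x -> nondecr y ->
    forall s : 'S_n.+1,
      opfold oplus (fun i => otimes (x (rev_ord i)) (y i))
        <= opfold oplus (fun i => otimes (x (s i)) (y i))
      /\ opfold oplus (fun i => otimes (x (s i)) (y i))
        <= opfold oplus (fun i => otimes (x i) (y i)).

Definition dual_rearrangement (otimes oplus : R -> R -> R) : Prop :=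
  forall (n : nat) (x y : 'I_n.+1 -> R),
    (forall i, in01 (x i)) -> (forall i, in01 (y i)) ->
    nondecr x -> nondecr y ->
    forall s : 'S_n.+1,
      opfold otimes (fun i => oplus (x (s i)) (y i))
        <= opfold otimes (fun i => oplus (x (rev_ord i)) (y i))
      /\ opfold otimes (fun i => oplus (x i) (y i))
        <= opfold otimes (fun i => oplus (x (s i)) (y i)).

End Defs.

From mathcomp Require Import all_boot all_order all_algebra all_fingroup.
From mathcomp Require Import reals lra.
Set Implicit Arguments. Unset Strict Implicit. Unset Printing Implicit Defensive.
Import Order.TTheory GRing.Theory Num.Theory.
Local Open Scope ring_scope.

(* For terms in [0,1], an iterated drastic maximum is 1 as soon as two terms
   are nonzero, and otherwise equals its only nonzero term (or 0).  A T-norm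
   without zero divisors vanishes exactly when an argument does, so the nonzero
   terms of the arrangement x_s(i) (x) y_i are indexed by
   {i | y_i <> 0} /\ s^-1 {j | x_j <> 0}, an intersection of two up-closed
   subsets of {0..n}.  Its size is minimal for the reversal (pigeonhole) and
   maximal for the identity (up-closed sets are nested); moreover each term of
   the reversal is dominated by some term of any arrangement (pigeonhole again),
   and every term by x_n (x) y_n.  The dual inequality follows by complementation
   u |-> 1 - u, which exchanges T_d and T_d', turns (+) into the T-norm
   Phi((+)), and reverses both sequences. *)

Lemma card_set_count (T : finType) (P : pred T) : #|[set i | P i]| = count P (enum T).
Proof. by rewrite cardsE cardE enumT /enum_mem size_filter. Qed.

Lemma sum_support_le1 (T : finType) (V : nmodType) (F : T -> V) (i0 : T) :
  (#|[set i | F i != 0%R]| <= 1)%N -> exists k, \sum_i F i = F k.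
Proof.
move=> supp_le1; case: (pickP (fun i => F i != 0)) => [k Fk|F0].
  exists k; rewrite (bigD1 k) //= big1 ?addr0 // => j jk; apply/eqP.
  apply: contraTT supp_le1 => Fj; rewrite -ltnNge; apply/card_gt1P.
  by exists k, j; rewrite !inE Fk Fj eq_sym jk.
exists i0; rewrite big1 => [|i _]; first by move/negbFE/eqP: (F0 i0).
by move/negbFE/eqP: (F0 i).
Qed.

Section Drastic.
Variable R : realType.
Implicit Types (u v : R) (l : seq R).

Lemma eq_opfold (op : R -> R -> R) n (a b : 'I_n.+1 -> R) :
  a =1 b -> opfold op a = opfold op b.
Proof. by move=> eq_ab; rewrite /opfold eq_ab; congr foldl; apply: eq_map => i. Qed.

Lemma in01_0 : in01 (0 : R). Proof. by rewrite /in01 lexx ler01. Qed.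

Lemma in01_1 : in01 (1 : R). Proof. by rewrite /in01 lexx ler01. Qed.

Lemma in01_subr1 u : in01 u -> in01 (1 - u).
Proof. by rewrite /in01 => /andP[u0 u1]; apply/andP; split; lra. Qed.

Lemma drastic_max_ge0E u v : 0 <= u -> 0 <= v ->
  drastic_max u v = if u == 0 then v else if v == 0 then u else 1.
Proof.
move=> u0 v0; rewrite /drastic_max.
have [->|uz] := eqVneq u 0; first by rewrite (min_idPl v0) (max_idPr v0) eqxx.
have [->|vz] := eqVneq v 0; first by rewrite (min_idPr u0) (max_idPl u0) eqxx.
have : 0 < Num.min u v by rewrite lt_min !lt_def uz vz u0 v0.
by rewrite lt_def => /andP[/negPf -> _].
Qed.

Lemma foldl_drastic_max u l : all (>= 0%R) (u :: l) ->
  foldl (@drastic_max R) u l =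
  if (1 < count (predC1 0%R) (u :: l))%N then 1 else \sum_(v <- u :: l) v.
Proof.
elim: l u => [|v l IHl] u /=; first by rewrite big_seq1 => _; case: eqP.
move=> /and3P[u0 v0 l0]; rewrite IHl /=; last first.
  by rewrite l0 drastic_max_ge0E // andbT; case: ifP => // _; case: ifP; rewrite ?ler01.
rewrite drastic_max_ge0E // !big_cons.
have [->|uz] := eqVneq u 0; first by rewrite /= add0r.
have [->|vz] := eqVneq v 0; first by rewrite uz add0r.
rewrite oner_neq0 /= ltnS; case: ltnP => // l_nz.
suff -> : \sum_(w <- l) w = 0 by rewrite addr0.
rewrite leqn0 eqn0Ngt -has_count in l_nz.
by rewrite big1_seq // => w /andP[_ /(hasPn l_nz)/negPn/eqP].
Qed.

Lemma opfold_drastic_maxE n (a : 'I_n.+1 -> R) : (forall i, 0 <= a i) ->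
  opfold (@drastic_max R) a =
  if (1 < #|[set i | a i != 0%R]|)%N then 1 else \sum_i a i.
Proof.
move=> a0; have enum_a : a ord0 :: [seq a (lift ord0 i) | i : 'I_n] = map a (enum 'I_n.+1).
  by rewrite enum_ordSl /= -map_comp.
rewrite /opfold foldl_drastic_max enum_a; last first.
  by apply/allP => _ /mapP[i _ ->].
by rewrite count_map card_set_count big_map big_enum.
Qed.

Lemma drastic_max_compl u v : drastic_max (1 - u) (1 - v) = 1 - drastic_min u v.
Proof.
rewrite /drastic_max /drastic_min; have [uv|vu] := lerP u v.
  have vu' : 1 - v <= 1 - u by lra.
  rewrite (min_idPr vu') (max_idPl vu') subr_eq0 eq_sym.
  by case: ifP; rewrite ?subr0.
have uv' : 1 - u <= 1 - v by lra.
rewrite (min_idPl uv') (max_idPr uv') subr_eq0 eq_sym.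
by case: ifP; rewrite ?subr0.
Qed.

Lemma foldl_drastic_min u l :
  foldl (@drastic_min R) u l = 1 - foldl (@drastic_max R) (1 - u) [seq 1 - v | v <- l].
Proof.
by elim: l u => [|v l IHl] u /=; rewrite ?subKr // IHl drastic_max_compl.
Qed.

Lemma opfold_drastic_min n (a : 'I_n.+1 -> R) :
  opfold (@drastic_min R) a = 1 - opfold (@drastic_max R) (fun i => 1 - a i).
Proof. by rewrite /opfold foldl_drastic_min -map_comp. Qed.

Section OpfoldDrasticMax.
Variable n : nat.
Implicit Types a b : 'I_n.+1 -> R.

Lemma opfold_drastic_max_entry a : (forall i, in01 (a i)) ->
  (#|[set i | a i != 0%R]| <= 1)%N -> exists k, opfold (@drastic_max R) a = a k.
Proof.
move=> a01 supp_le1; rewrite opfold_drastic_maxE ?ltnNge ?supp_le1 /=.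
  exact: (sum_support_le1 ord0).
by move=> i; case/andP: (a01 i).
Qed.

Lemma opfold_drastic_max_in01 a : (forall i, in01 (a i)) ->
  in01 (opfold (@drastic_max R) a).
Proof.
move=> a01; have [supp_gt1|supp_le1] := ltnP 1 #|[set i | a i != 0%R]|.
  rewrite opfold_drastic_maxE ?supp_gt1; first exact: in01_1.
  by move=> i; case/andP: (a01 i).
by have [k ->] := opfold_drastic_max_entry a01 supp_le1.
Qed.

Lemma le_opfold_drastic_max a k : (forall i, in01 (a i)) ->
  a k <= opfold (@drastic_max R) a.
Proof.
move=> a01; have a_ge0 i : 0 <= a i by case/andP: (a01 i).
rewrite opfold_drastic_maxE //; case: ifP => _; first by case/andP: (a01 k).
by rewrite (bigD1 k) //= lerDl sumr_ge0.
Qed.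

Lemma opfold_drastic_max_le a b :
  (forall i, in01 (a i)) -> (forall i, in01 (b i)) ->
  (#|[set i | a i != 0%R]| <= #|[set i | b i != 0%R]|)%N ->
  (forall i, exists j, a i <= b j) ->
  opfold (@drastic_max R) a <= opfold (@drastic_max R) b.
Proof.
move=> a01 b01 supp_ab le_ab.
have [supp_b_gt1|supp_b_le1] := ltnP 1 #|[set i | b i != 0%R]|.
  rewrite [X in _ <= X]opfold_drastic_maxE ?supp_b_gt1; last first.
    by move=> i; case/andP: (b01 i).
  by case/andP: (opfold_drastic_max_in01 a01).
have [k ->] := opfold_drastic_max_entry a01 (leq_trans supp_ab supp_b_le1).
have [j le_kj] := le_ab k.
exact: le_trans le_kj (le_opfold_drastic_max j b01).
Qed.

Lemma opfold_drastic_max_inj a (h : 'I_n.+1 -> 'I_n.+1) : injective h ->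
  (forall i, in01 (a i)) ->
  opfold (@drastic_max R) (fun i => a (h i)) = opfold (@drastic_max R) a.
Proof.
move=> h_inj a01; have a_ge0 i : 0 <= a i by case/andP: (a01 i).
rewrite !opfold_drastic_maxE // [in RHS](reindex_inj h_inj).
suff -> : [set i | a (h i) != 0%R] = h @^-1: [set i | a i != 0%R] by rewrite card_preimset.
by apply/setP => i; rewrite !inE.
Qed.

End OpfoldDrasticMax.
End Drastic.

#[local] Hint Resolve in01_0 in01_1 : core.

Lemma card_setI_preim_ge (T : finType) (s : T -> T) (A B : {set T}) : injective s ->
  (#|A| + #|B| <= #|A :&: s @^-1: B| + #|T|)%N.
Proof.
by move=> s_inj; rewrite -(card_preimset B s_inj) -cardsUI addnC leq_add2l max_card.
Qed.

Section UpClosedSets.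
Variable N : nat.
Implicit Types A B : {set 'I_N}.

Definition up_closed A := forall i j : 'I_N, (i <= j)%N -> i \in A -> j \in A.

Lemma up_closed_ge (k : nat) : up_closed [set i : 'I_N | (k <= i)%N].
Proof. by move=> i j ij; rewrite !inE => /leq_trans; apply. Qed.

Lemma up_closed_total A B : up_closed A -> up_closed B -> (A \subset B) || (B \subset A).
Proof.
move=> upA upB; case: (boolP (A \subset B)) => //= /subsetPn[i iA iNB].
apply/subsetP => j jB; have [ij|ji] := leqP i j; first exact: upA ij iA.
by rewrite (upB _ _ (ltnW ji) jB) in iNB.
Qed.

Lemma card_setI_preim_le A B (s : 'I_N -> 'I_N) : injective s ->
  up_closed A -> up_closed B -> (#|A :&: s @^-1: B| <= #|A :&: B|)%N.
Proof.
move=> s_inj upA upB; case/orP: (up_closed_total upA upB) => sub.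
  by rewrite (setIidPl sub) subset_leq_card ?subsetIl.
by rewrite (setIidPr sub) -(card_preimset B s_inj) subset_leq_card ?subsetIr.
Qed.

(* The reversal attains the pigeonhole bound #|A| + #|B| - N. *)
Lemma card_setI_preim_rev_le A B (s : 'I_N -> 'I_N) : injective s ->
  up_closed A -> up_closed B ->
  (#|A :&: @rev_ord N @^-1: B| <= #|A :&: s @^-1: B|)%N.
Proof.
move=> s_inj upA upB.
have [->|[k]] := set_0Vmem (A :&: @rev_ord N @^-1: B); first by rewrite cards0.
rewrite !inE => /andP[kA kB].
have cover : A :|: @rev_ord N @^-1: B = setT.
  apply/setP => i; rewrite !inE; have [ki|ik] := leqP k i; first by rewrite (upA _ _ ki kA).
  by rewrite (upB _ (rev_ord i) _ kB) ?orbT //=; apply: leq_sub2l; exact: ltnW.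
have := card_setI_preim_ge A B s_inj; have := cardsUI A (@rev_ord N @^-1: B).
rewrite cover cardsT card_preimset ?card_ord; last exact: rev_ord_inj.
by move=> <-; rewrite addnC leq_add2r.
Qed.

End UpClosedSets.

Section Nondecreasing.
Variables (R : realType) (n : nat).
Implicit Type z : 'I_n.+1 -> R.

Lemma up_closed_support z : (forall i, 0 <= z i) -> nondecr z ->
  up_closed [set i | z i != 0%R].
Proof.
move=> z_ge0 z_nd i j ij; rewrite !inE => zi.
by rewrite gt_eqF // (lt_le_trans _ (z_nd _ _ ij)) // lt_def zi z_ge0.
Qed.

Lemma nondecr_subr1_rev z : nondecr z -> nondecr (fun i => 1 - z (rev_ord i)).
Proof. by move=> z_nd i j ij; rewrite lerD2l lerN2; apply: z_nd; apply: leq_sub2l. Qed.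

End Nondecreasing.

Section TnormRearrangement.
Variables (R : realType) (T : R -> R -> R).
Hypothesis T_Tnorm : Tnorm T.
Implicit Types u v : R.

Lemma Tnorm_in01 u v : in01 u -> in01 v -> in01 (T u v).
Proof. by case: T_Tnorm => -[T01 _ _ _ _] _; apply: T01. Qed.

Lemma Tnorm_le u v u' v' : in01 u -> in01 v -> in01 u' -> in01 v' ->
  u <= u' -> v <= v' -> T u v <= T u' v'.
Proof.
case: T_Tnorm => -[_ TC _ Tmono _] _ u01 v01 u'01 v'01 uu' vv'.
apply: le_trans (Tmono _ _ _ u01 u'01 v01 uu') _.
by rewrite TC // [T u' v']TC //; apply: Tmono.
Qed.

Hypothesis T_nzd : no_zero_divisors T.

Lemma Tnorm_eq0 u v : in01 u -> in01 v -> (T u v == 0) = (u == 0) || (v == 0).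
Proof.
case: T_Tnorm => -[_ TC _ _ _] T1 u01 v01.
have T_0 w : in01 w -> T w 0 = 0.
  move=> w01; apply/eqP; rewrite eq_le; case/andP: (Tnorm_in01 w01 (in01_0 R)) => -> _.
  have w_le1 : w <= 1 by case/andP: w01.
  by rewrite andbT; apply: le_trans (Tnorm_le w01 _ _ _ w_le1 (lexx 0)) _ => //; rewrite T1.
have [->|u0] := eqVneq u 0; first by rewrite TC // T_0 ?eqxx.
have [->|v0] := eqVneq v 0; first by rewrite T_0 ?eqxx ?orbT.
have [->|u1] := eqVneq u 1; first by rewrite T1 // (negPf v0).
have [->|v1] := eqVneq v 1; first by rewrite [T u 1]TC // T1 // (negPf u0).
have in_open w : in01 w -> w != 0 -> w != 1 -> 0 < w < 1.
  by case/andP=> w_ge0 w_le1 w0 w1; rewrite !lt_def w0 w_ge0 eq_sym w1 w_le1.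
by rewrite orbF; apply/negbTE/eqP/T_nzd; apply: in_open.
Qed.

Section Arrangements.
Variables (n : nat) (x y : 'I_n.+1 -> R).
Hypotheses (x01 : forall i, in01 (x i)) (y01 : forall i, in01 (y i)).
Hypotheses (x_nd : nondecr x) (y_nd : nondecr y).

Local Notation arrangement s := (fun i => T (x (s i)) (y i)).

Let arrangement_in01 (s : 'I_n.+1 -> 'I_n.+1) i : in01 (arrangement s i).
Proof. exact: Tnorm_in01. Qed.

Lemma support_arrangement (s : 'I_n.+1 -> 'I_n.+1) :
  [set i | T (x (s i)) (y i) != 0%R] =
  [set i | y i != 0%R] :&: s @^-1: [set i | x i != 0%R].
Proof. by apply/setP => i; rewrite !inE Tnorm_eq0 // negb_or andbC. Qed.

Let up_closed_support_x : up_closed [set i | x i != 0%R].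
Proof. by apply: up_closed_support => // i; case/andP: (x01 i). Qed.

Let up_closed_support_y : up_closed [set i | y i != 0%R].
Proof. by apply: up_closed_support => // i; case/andP: (y01 i). Qed.

Lemma arrangement_rev_le (s : 'I_n.+1 -> 'I_n.+1) : injective s ->
  opfold (@drastic_max R) (arrangement (@rev_ord n.+1))
  <= opfold (@drastic_max R) (arrangement s).
Proof.
move=> s_inj; apply: opfold_drastic_max_le => [i|i||i]; try exact: arrangement_in01.
  by rewrite !support_arrangement; apply: card_setI_preim_rev_le.
have : (0 < #|[set j : 'I_n.+1 | (i <= j)%N] :&:
               s @^-1: [set k : 'I_n.+1 | (rev_ord i <= k)%N]|)%N.
  have up_i := @up_closed_ge n.+1 i; have up_rev_i := @up_closed_ge n.+1 (rev_ord i).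
  apply: leq_trans (card_setI_preim_rev_le s_inj up_i up_rev_i).
  by rewrite card_gt0; apply/set0Pn; exists i; rewrite !inE !leqnn.
case/card_gt0P => j; rewrite !inE => /andP[ij rev_i_sj].
by exists j; apply: Tnorm_le => //; [apply: x_nd | apply: y_nd].
Qed.

Lemma arrangement_le_id (s : 'I_n.+1 -> 'I_n.+1) : injective s ->
  opfold (@drastic_max R) (arrangement s) <= opfold (@drastic_max R) (arrangement id).
Proof.
move=> s_inj; apply: opfold_drastic_max_le => [i|i||i]; try exact: arrangement_in01.
  rewrite support_arrangement (support_arrangement id).
  have -> : id @^-1: [set i | x i != 0%R] = [set i | x i != 0%R].
    by apply/setP => j; rewrite !inE.
  exact: card_setI_preim_le.
by exists ord_max; apply: Tnorm_le => //; [apply: x_nd | apply: y_nd]; apply: leq_ord.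
Qed.

End Arrangements.

Lemma drastic_max_rearrangement : rearrangement T (@drastic_max R).
Proof.
move=> n x y x01 y01 x_nd y_nd s.
by split; [apply: arrangement_rev_le | apply: arrangement_le_id] => //; apply: perm_inj.
Qed.

End TnormRearrangement.

Section Duality.
Variables (R : realType) (S : R -> R -> R).
Hypothesis S_Tconorm : Tconorm S.

Lemma Tnorm_Phi : Tnorm (Phi S).
Proof.
case: S_Tconorm => -[S01 SC SA Smono _] S0.
have Phi1 u : in01 u -> Phi S 1 u = u.
  by move=> u01; rewrite /Phi subrr S0 ?subKr //; apply: in01_subr1.
split; last exact: Phi1.
split.
- by move=> u v u01 v01; rewrite /Phi; apply: in01_subr1; apply: S01; apply: in01_subr1.
- by move=> u v u01 v01; rewrite /Phi SC //; apply: in01_subr1.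
- by move=> u v w u01 v01 w01; rewrite /Phi !subKr SA //; apply: in01_subr1.
- move=> u v w u01 v01 w01 uv; rewrite /Phi lerD2l lerN2.
  by apply: Smono; rewrite ?lerD2l ?lerN2 //; apply: in01_subr1.
- by exists 1.
Qed.

Lemma opfold_drastic_min_arrangement n (x y : 'I_n.+1 -> R) (s s' : 'I_n.+1 -> 'I_n.+1) :
  (forall i, in01 (x i)) -> (forall i, in01 (y i)) ->
  (forall i, rev_ord (s (rev_ord i)) = s' i) ->
  opfold (@drastic_min R) (fun i => S (x (s i)) (y i)) =
  1 - opfold (@drastic_max R) (fun i => Phi S (1 - x (rev_ord (s' i))) (1 - y (rev_ord i))).
Proof.
move=> x01 y01 ss'.
rewrite opfold_drastic_min -[in RHS](opfold_drastic_max_inj (@rev_ord_inj n.+1)).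
  by congr (_ - _); apply: eq_opfold => i; rewrite /Phi -ss' !rev_ordK !subKr.
by move=> i; apply: (Tnorm_in01 Tnorm_Phi); apply: in01_subr1.
Qed.

Lemma drastic_min_dual_rearrangement :
  no_zero_divisors (Phi S) -> dual_rearrangement (@drastic_min R) S.
Proof.
move=> Phi_nzd n x y x01 y01 x_nd y_nd s.
rewrite (opfold_drastic_min_arrangement (s' := fun i => rev_ord (s (rev_ord i)))) //.
rewrite (opfold_drastic_min_arrangement (s := @rev_ord _) (s' := @rev_ord _)) //;
  last by move=> i; rewrite rev_ordK.
rewrite (opfold_drastic_min_arrangement (s := id) (s' := id)) //; last exact: rev_ordK.
have x'01 i : in01 (1 - x (rev_ord i)) by apply: in01_subr1.
have y'01 i : in01 (1 - y (rev_ord i)) by apply: in01_subr1.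
have s'_inj : injective (fun i => rev_ord (s (rev_ord i))).
  by move=> i j /rev_ord_inj/perm_inj/rev_ord_inj.
rewrite !lerD2l !lerN2; split.
- apply: (arrangement_rev_le Tnorm_Phi Phi_nzd x'01 y'01 _ _ s'_inj);
  exact: nondecr_subr1_rev.
- apply: (arrangement_le_id Tnorm_Phi Phi_nzd x'01 y'01 _ _ s'_inj);
  exact: nondecr_subr1_rev.
Qed.

End Duality.

Theorem theorem12 (R : realType) :
  (forall otimes : R -> R -> R,
      Tnorm otimes -> no_zero_divisors otimes ->
      rearrangement otimes (@drastic_max R))
  /\
  (forall oplus : R -> R -> R,
      Tconorm oplus -> no_zero_divisors (Phi oplus) ->
      dual_rearrangement (@drastic_min R) oplus).
Proof.
split=> op op_norm op_nzd; first exact: drastic_max_rearrangement.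
exact: drastic_min_dual_rearrangement.
Qed.
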